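(* Let $p\ge5$ be prime. Then the following graph $G_p$ has no induced regular subgraph of order $p$. (a) If $p=12t+1$, then $G_p=3t\,C_9[K_{6t}]$, which has $\frac98(p-1)^2$ vertices. (b) If $p=12t+5$, then $G_p=(3t+1)\,C_9[K_{6t+2}]$, which has $\frac98(p-1)^2$ vertices. (c) If $p=12t+7$, then $G_p=C_5[K_{6t+3}]\sqcup(3t+1)\,C_9[K_{6t+3}]$, which has $\frac18(p-1)(9p-7)$ vertices. (d) If $p=12t+11$, then $G_p=C_4[K_{6t+5}]\sqcup(3t+2)\,C_9[K_{6t+5}]$, which has $\frac18(p-1)(9p-11)$ vertices. (Here $t\ge0$ is an integer.)
   Context: Graphs are finite and simple; the order of a graph is its number of vertices. $C_r$ is the cycle on $r$ vertices and $K_s$ the complete graph on $s$ vertices. The lexicographic product $G[H]$ has vertex set $V(G)\times V(H)$, with $(a,b)$ adjacent to $(a',b')$ iff $a$ is adjacent to $a'$ in $G$, or $a=a'$ and $b$ is adjacent to $b'$ in $H$. For a graph $G$ and integer $m\ge0$, $mG$ denotes the disjoint union of $m$ copies of $G$, and $\sqcup$ denotes disjoint union. An induced regular subgraph is an induced subgraph in which all vertices have the same degree. *)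

From mathcomp Require Import all_boot.

(* A graph is given by an adjacency relation on a finite vertex type.
   All graphs built below are simple (symmetric and irreflexive). *)

Definition cycle_adj (r : nat) : rel 'I_r :=
  fun a b => (val b == (val a).+1 %% r) || (val a == (val b).+1 %% r).

Definition complete_adj (s : nat) : rel 'I_s := fun a b => a != b.


Definition lex_adj {A B : finType} (eG : rel A) (eH : rel B) : rel (A * B) :=
  fun x y => eG x.1 y.1 || ((x.1 == y.1) && eH x.2 y.2).

Definition copies_adj {A : finType} (m : nat) (e : rel A) : rel ('I_m * A) :=
  fun x y => (x.1 == y.1) && e x.2 y.2.


Definition sum_adj {A B : finType} (e1 : rel A) (e2 : rel B) : rel (A + B) :=
  fun x y => match x, y with
             | inl a, inl a' => e1 a a'
             | inr b, inr b' => e2 b b'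
             | _, _ => false
             end.

Definition CK (r s : nat) : rel ('I_r * 'I_s) := lex_adj (cycle_adj r) (complete_adj s).

Definition induced_regular {V : finType} (e : rel V) (S : {set V}) : Prop :=
  exists d : nat, forall x, x \in S -> #|[set y in S | e x y]| = d.

Definition has_induced_regular_of_order {V : finType} (e : rel V) (k : nat) : Prop :=
  exists S : {set V}, #|S| = k /\ induced_regular e S.

(* In C_r[K_s], a d-regular induced subgraph S meets the blocks in sizes b_i with
   b_(i-1) + b_i + b_(i+1) = d + 1 whenever b_i > 0.  If some block is empty, the nonempty
   blocks form runs of one or two consecutive blocks carrying exactly d + 1 vertices each,
   so |S| = k (d + 1) with k <= r/2, and d + 1 <= 2 s if k = 1.  If no block is empty,
   3 |S| = r (d + 1), which for r = 9 is again of this form with k = 3.  These constraints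
   add up over the components, so for |S| = p prime, d + 1 divides p: d + 1 = 1 bounds p by
   the sum of the r/2, and d + 1 = p needs k = 1 with p <= 2 s; both are too small.  For the
   C_5 or C_4 component the remaining case 3 z = r (d + 1) makes 3 divide d + 1, and
   primality then forces p = r (mod 3), against the residue of p. *)

From mathcomp Require Import all_boot zify.

Definition closed_nbhd_sums (D : nat) (x : nat -> nat) : Prop :=
  forall i, 0 < x i.+1 -> x i + x i.+1 + x i.+2 = D.

Definition run_multiple (s D n c : nat) : Prop :=
  exists k, [/\ c = k * D, k <= n & (k = 1 -> D <= 2 * s)].

Lemma run_multipleD {s D n1 n2 c1 c2} :
  run_multiple s D n1 c1 -> run_multiple s D n2 c2 ->
  run_multiple s D (n1 + n2) (c1 + c2).
Proof.
move=> [k1 [-> k1n k1D]] [k2 [-> k2n k2D]].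
by exists (k1 + k2); split; [rewrite mulnDl | lia | lia].
Qed.

Lemma run_multipleW {s D n1 n2 c} :
  n1 <= n2 -> run_multiple s D n1 c -> run_multiple s D n2 c.
Proof. by move=> n12 [k [-> kn k1]]; exists k; split=> //; apply: leq_trans n12. Qed.

Lemma run_multiple_sum s D n m (F : 'I_m -> nat) :
  (forall u, run_multiple s D n (F u)) -> run_multiple s D (m * n) (\sum_u F u).
Proof.
elim: m F => [|m IH] F F_run; first by exists 0; rewrite big_ord0.
by rewrite big_ord_recr mulSnr; apply: run_multipleD; [apply: IH => u |]; apply: F_run.
Qed.

(* After a zero term, a run of nonzero terms has length at most 2, sums to D and is
   followed by a zero. *)
Lemma run_multiple_between_zeros s D n (x : nat -> nat) :
  x 0 = 0 -> x n = 0 -> (forall i, x i <= s) -> closed_nbhd_sums D x ->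
  run_multiple s D n./2 (\sum_(i < n) x i).
Proof.
elim/ltn_ind: n x => n IH x x0 xn xs xD.
have [->|n_gt0] := posnP n; first by exists 0; rewrite big_ord0.
pose tail m := \sum_(i < n - m) x (i + m).
have tail_run m : 0 < m <= n -> x m = 0 -> run_multiple s D (n - m)./2 (tail m).
  case/andP=> m_gt0 mn xm; apply: (IH (n - m) _ (fun i => x (i + m))) => [|||i|i].
  - lia.
  - by rewrite add0n.
  - by rewrite subnK.
  - exact: xs.
  - by rewrite !addSn; apply: xD.
have sum_split m : m <= n -> \sum_(i < n) x i = \sum_(i < m) x i + tail m.
  move=> mn; rewrite -!(big_mkord xpredT) (big_cat_nat (leq0n m) mn) /=.
  by rewrite -{2}[m]add0n big_addn !big_mkord.
have [x1|x1_gt0] := posnP (x 1).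
  rewrite (sum_split 1) // big_ord1 x0 add0n.
  by apply: run_multipleW (tail_run 1 _ x1); [lia | rewrite n_gt0].
have n_gt1 : 1 < n.
  by rewrite ltn_neqAle n_gt0 andbT; apply: contraTneq x1_gt0 => n1; subst n; rewrite xn.
have x12 : x 1 + x 2 = D by rewrite -(xD 0 x1_gt0) x0.
have run_D : run_multiple s D 1 D.
  exists 1; split=> //; first by rewrite mul1n.
  by move=> _; rewrite -x12; move: (xs 1) (xs 2); lia.
have [x2|x2_gt0] := posnP (x 2).
  rewrite (sum_split 2) // big_ord_recr big_ord1 /= x0 add0n.
  have -> : x 1 = D by rewrite -x12 x2 addn0.
  by apply: run_multipleW (run_multipleD run_D (tail_run 2 _ x2)); [lia | rewrite n_gt1].
have n_gt2 : 2 < n.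
  by rewrite ltn_neqAle n_gt1 andbT; apply: contraTneq x2_gt0 => n2; subst n; rewrite xn.
have x3 : x 3 = 0 by move: (xD 1 x2_gt0); lia.
rewrite (sum_split 3) // !big_ord_recr big_ord0 /= x0 add0n x12.
by apply: run_multipleW (run_multipleD run_D (tail_run 3 _ x3)); [lia | rewrite n_gt2].
Qed.

Lemma sum_ord_shift1 r (x : nat -> nat) :
  x r = x 0 -> \sum_(i < r) x i.+1 = \sum_(i < r) x i.
Proof.
case: r => [|r] xr; first by rewrite !big_ord0.
by rewrite big_ord_recr big_ord_recl /= xr addnC.
Qed.

Section Cycles.

Variables (r : nat) (x : nat -> nat).
Hypothesis x_periodic : forall i, x (i + r) = x i.

Lemma periodic_mod i : x (i %% r) = x i.
Proof.
rewrite {2}(divn_eq i r) addnC; elim: (i %/ r) => [|q IH]; first by rewrite addn0.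
by rewrite mulSnr addnA x_periodic.
Qed.

Lemma sum_periodic_shift j : \sum_(i < r) x (i + j) = \sum_(i < r) x i.
Proof.
elim: j => [|j IH]; first by apply: eq_bigr => i _; rewrite addn0.
rewrite -IH -(sum_ord_shift1 r (fun i => x (i + j))); last first.
  by rewrite add0n addnC x_periodic.
by apply: eq_bigr => i _; rewrite addnS addSn.
Qed.

Variables (s D : nat).

Lemma run_multiple_cycle :
  (forall i, x i <= s) -> closed_nbhd_sums D x ->
  3 * \sum_(i < r) x i = r * D \/ run_multiple s D r./2 (\sum_(i < r) x i).
Proof.
move=> xs xD; have [r0|r_gt0] := posnP r; first by left; rewrite r0 big_ord0.
have [j xj|x_pos] := pickP (fun i : 'I_r => x i == 0).
  right; rewrite -(sum_periodic_shift j).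
  apply: (run_multiple_between_zeros s D r (fun i => x (i + j))) => [|||k].
  - by rewrite add0n (eqP xj).
  - by rewrite addnC x_periodic (eqP xj).
  - by move=> k; apply: xs.
  - by rewrite !addSn; apply: xD.
have x_gt0 i : 0 < x i.
  rewrite -periodic_mod lt0n; apply/negbT.
  exact: (x_pos (Ordinal (ltn_pmod i r_gt0))).
have shift1 : \sum_(i < r) x i.+1 = \sum_(i < r) x i.
  by rewrite -(sum_periodic_shift 1); apply: eq_bigr => i _; rewrite addn1.
have shift2 : \sum_(i < r) x i.+2 = \sum_(i < r) x i.
  by rewrite -(sum_periodic_shift 2); apply: eq_bigr => i _; rewrite addn2.
(* With no zero term every closed neighbourhood sum is D, and together they count each
   term three times. *)
left; transitivity (\sum_(i < r) (x i + x i.+1 + x i.+2)).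
  by rewrite !big_split /= shift1 shift2 !mulSn mul0n addn0 addnA.
rewrite (eq_bigr (fun=> D)) => [|i _]; last by apply: xD; apply: x_gt0.
by rewrite sum_nat_const card_ord.
Qed.

End Cycles.

Definition regular_on {V : finType} (e : rel V) (S : {set V}) (d : nat) : Prop :=
  forall x, x \in S -> #|[set y in S | e x y]| = d.

Lemma card_fibers (T : finType) (U : eqType) (f : T -> U) (A : {set T}) (K : seq U) :
  uniq K -> #|[set y in A | f y \in K]| = \sum_(k <- K) #|[set y in A | f y == k]|.
Proof.
elim: K => [_|k K IH /andP[kK uK]].
  by rewrite big_nil; apply/eqP; rewrite cards_eq0; apply/eqP/setP => y; rewrite !inE andbF.
rewrite big_cons -(IH uK) -cardsUI; set I := _ :&: _.
have -> : I = set0.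
  apply/setP => y; rewrite !inE; apply/negP => /andP[/andP[_ /eqP fk] /andP[_]].
  by rewrite fk (negbTE kK).
by rewrite cards0 addn0; apply: eq_card => y; rewrite !inE andb_orr.
Qed.

Lemma card_preimset_pair (I A : finType) (S : {set I * A}) :
  #|S| = \sum_(u : I) #|pair u @^-1: S|.
Proof.
rewrite -sum1_card (eq_bigr (fun u => \sum_(a | (u, a) \in S) 1)) => [|u _].
  by rewrite pair_big_dep; apply: eq_bigl => -[u a].
by rewrite -sum1_card; apply: eq_bigl => a; rewrite inE.
Qed.

Lemma card_preimset_sum (A B : finType) (S : {set A + B}) :
  #|S| = #|@inl A B @^-1: S| + #|@inr A B @^-1: S|.
Proof.
rewrite -!sum1_card big_mkcond big_sumType /= -!big_mkcond.
by congr (_ + _); apply: eq_bigl => x; rewrite inE.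
Qed.

Lemma regular_on_preimset (A V : finType) (e : rel V) (e' : rel A) (f : A -> V)
    (S : {set V}) d :
  injective f -> (forall a b, e (f a) (f b) = e' a b) ->
  (forall a y, e (f a) y -> y \in codom f) ->
  regular_on e S d -> regular_on e' (f @^-1: S) d.
Proof.
move=> f_inj f_hom f_closed S_reg a; rewrite inE => /S_reg <-.
rewrite -(card_imset _ f_inj); apply: eq_card => y; apply/imsetP/idP.
  by case=> b; rewrite !inE -f_hom => /andP[bS ab] ->; rewrite bS ab.
rewrite inE => /andP[yS ay]; have /codomP[b y_fb] := f_closed a y ay; subst y.
by exists b; rewrite // !inE yS -f_hom.
Qed.

Lemma uniq_mod_consecutive r i : 2 < r -> uniq [:: i %% r; i.+1 %% r; i.+2 %% r].
Proof.
move=> r_gt2; have r_gt1 := ltnW r_gt2.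
have neq k l : k < l < r -> (i + k == i + l %[mod r]) = false.
  by move=> /andP[kl lr]; rewrite eqn_modDl !modn_small ?(ltn_eqF kl) ?(ltn_trans kl).
have := neq 0 1; have := neq 0 2; have := neq 1 2.
by rewrite addn0 addn1 addn2 /= !inE => -> // -> // -> //.
Qed.

Lemma CK_closed_nbhd r s i (x y : 'I_r * 'I_s) :
  val x.1 = i.+1 %% r ->
  (y == x) || CK r s x y = (val y.1 \in [:: i %% r; i.+1 %% r; i.+2 %% r]).
Proof.
case: x y => [a u] [b v] /= ha; rewrite /CK /lex_adj /cycle_adj /complete_adj /= !inE.
have pred_b : (i.+1 %% r == (val b).+1 %% r) = (val b == i %% r).
  by rewrite -(addn1 i) -(addn1 b) eqn_modDr (modn_small (ltn_ord b)) eq_sym.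
have succ_a : (i.+1 %% r).+1 %% r = i.+2 %% r by rewrite -addn1 modnDml addn1.
rewrite xpair_eqE ha succ_a pred_b [a == b]eq_sym -val_eqE /= ha [u == v]eq_sym.
by case: (v == u); case: (_ == i %% r); case: (_ == i.+1 %% r); case: (_ == i.+2 %% r).
Qed.

Lemma CK_irrefl r s (x : 'I_r * 'I_s) : 1 < r -> ~~ CK r s x x.
Proof.
case: x => a u r_gt1; rewrite /CK /lex_adj /cycle_adj /complete_adj /= !eqxx /= orbF orbb.
move: (val a) (ltn_ord a) => n n_lt_r.
case: (ltngtP n.+1 r) n_lt_r r_gt1 => [lt_nr _ _|//|<- _ n_gt0].
  by rewrite modn_small // ltn_eqF.
by rewrite modnn -lt0n.
Qed.

Section CycleBlowUp.

Variables (r s d : nat) (S : {set 'I_r * 'I_s}).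
Hypotheses (r_gt2 : 2 < r) (S_reg : regular_on (CK r s) S d).

Let block k := #|[set y in S | val y.1 == k %% r]|.

Let block_periodic i : block (i + r) = block i.
Proof. by rewrite /block modnDr. Qed.

Let block_le i : block i <= s.
Proof.
have r_gt0 : 0 < r by apply: ltn_trans r_gt2.
pose o := Ordinal (ltn_pmod i r_gt0).
apply: (@leq_trans #|setX [set o] [set: 'I_s]|).
  by apply/subset_leq_card/subsetP => -[a b]; rewrite !inE -val_eqE => /andP[_ ->].
by rewrite cardsX cards1 cardsT card_ord mul1n.
Qed.

Let block_sums : closed_nbhd_sums d.+1 block.
Proof.
move=> i /card_gt0P[x]; rewrite inE => /andP[xS /eqP xi].
set N := [set y in S | CK r s x y].
have x_notin : x \notin N by rewrite inE (negbTE (CK_irrefl r s x (ltnW r_gt2))) andbF.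
have card_closed : #|x |: N| = #|N|.+1 by rewrite cardsU1 x_notin.
rewrite -(S_reg x xS) -card_closed.
have -> : #|x |: N| = #|[set y in S | val y.1 \in [:: i %% r; i.+1 %% r; i.+2 %% r]]|.
  apply: eq_card => y; rewrite [RHS]in_set -(CK_closed_nbhd r s i x y xi) in_setU1 in_set.
  by case: eqP => [->|]; rewrite ?xS.
rewrite (card_fibers _ _ (fun y => val y.1)) ?uniq_mod_consecutive //.
by rewrite !big_cons big_nil addn0 addnA.
Qed.

Let card_blocks : #|S| = \sum_(k < r) block k.
Proof.
have -> : S = [set y in S | val y.1 \in iota 0 r].
  by apply/setP => y; rewrite in_set mem_iota /= ltn_ord andbT.
rewrite (card_fibers _ _ (fun y => val y.1)) ?iota_uniq // -(big_mkord xpredT).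
rewrite /index_iota subn0; apply: eq_big_seq => k; rewrite mem_iota add0n => /andP[_ k_lt_r].
by rewrite /block modn_small.
Qed.

Lemma regular_CK_card : 3 * #|S| = r * d.+1 \/ run_multiple s d.+1 r./2 #|S|.
Proof. by rewrite card_blocks; apply: run_multiple_cycle. Qed.

End CycleBlowUp.

Lemma regular_CK_run_multiple r s S d :
  6 <= r -> 3 %| r -> regular_on (CK r s) S d -> run_multiple s d.+1 r./2 #|S|.
Proof.
move=> r_ge6 /dvdnP[q r_eq] S_reg; subst r.
have [card_S|] // := regular_CK_card _ _ _ _ (leq_trans (isT : 2 < 6) r_ge6) S_reg.
exists q; split.
- by apply/eqP; rewrite -(eqn_pmul2l (isT : 0 < 3)) card_S mulnCA mulnA.
- lia.
- lia.
Qed.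

Lemma regular_copies_CK_run_multiple m r s S d :
  6 <= r -> 3 %| r -> regular_on (copies_adj m (CK r s)) S d ->
  run_multiple s d.+1 (m * r./2) #|S|.
Proof.
move=> r_ge6 r3 S_reg; rewrite card_preimset_pair; apply: run_multiple_sum => u.
apply: (regular_CK_run_multiple _ _ _ _ r_ge6 r3).
apply: (regular_on_preimset _ _ _ _ (pair u) _ _ _ _ _ S_reg) => [a b [] //|a b|a [u' b]].
  by rewrite /copies_adj /= eqxx.
by rewrite /copies_adj /= => /andP[/eqP <- _]; apply: codom_f.
Qed.

Lemma prime_not_run_multiple p s D n :
  prime p -> 2 * s < p -> n < p -> ~ run_multiple s D n p.
Proof.
move=> p_prime s_lt n_lt [k [p_eq k_le k1]].
have /(primeP p_prime).2/orP[|] : D %| p by rewrite p_eq dvdn_mull.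
  by move/eqP=> D1; move: p_eq; rewrite D1; lia.
move/eqP=> Dp; have p_gt1 := prime_gt1 p_prime; rewrite Dp in p_eq k1; nia.
Qed.

Lemma prime_mod3_split p r D z w :
  prime p -> 1 < r -> coprime 3 r -> 3 * z = r * D -> D %| w -> p = z + w -> p = r %[mod 3].
Proof.
move=> p_prime r_gt1 r_coprime z_eq /dvdnP[K ->] p_eq.
have /dvdnP[e D_eq] : 3 %| D by rewrite -(Gauss_dvdr _ r_coprime) -z_eq dvdn_mulr.
have p_eq' : p = e * (r + 3 * K) by rewrite p_eq D_eq; nia.
have /(primeP p_prime).2/orP[/eqP e1|/eqP ep] : e %| p by rewrite p_eq' dvdn_mulr.
  by rewrite p_eq' e1; lia.
by have := prime_gt1 p_prime; rewrite {1}p_eq' ep; nia.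
Qed.

Lemma no_regular_copies_CK p m r s :
  prime p -> 6 <= r -> 3 %| r -> 2 * s < p -> m * r./2 < p ->
  ~ has_induced_regular_of_order (copies_adj m (CK r s)) p.
Proof.
move=> p_prime r_ge6 r3 s_lt m_lt [S [S_card [d S_reg]]].
apply: (prime_not_run_multiple _ _ d.+1 _ p_prime s_lt m_lt); rewrite -S_card.
exact: regular_copies_CK_run_multiple S_reg.
Qed.

Lemma no_regular_CK_sum_copies p r m r' s :
  prime p -> 2 < r -> coprime 3 r -> 6 <= r' -> 3 %| r' -> 2 * s < p ->
  r./2 + m * r'./2 < p -> p != r %[mod 3] ->
  ~ has_induced_regular_of_order (sum_adj (CK r s) (copies_adj m (CK r' s))) p.
Proof.
move=> p_prime r_gt2 r_coprime r'_ge6 r'3 s_lt n_lt p_mod [S [S_card [d S_reg]]].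
rewrite card_preimset_sum in S_card.
have reg_l : regular_on (CK r s) (inl @^-1: S) d.
  apply: (regular_on_preimset _ _ _ _ inl _ _ _ _ _ S_reg) => //; first by move=> a b [].
  by move=> a [a' _|]; rewrite ?codom_f.
have reg_r : regular_on (copies_adj m (CK r' s)) (inr @^-1: S) d.
  apply: (regular_on_preimset _ _ _ _ inr _ _ _ _ _ S_reg) => //; first by move=> a b [].
  by move=> a [|b _]; rewrite ?codom_f.
have run_r := regular_copies_CK_run_multiple _ _ _ _ _ r'_ge6 r'3 reg_r.
case: (regular_CK_card _ _ _ _ r_gt2 reg_l) => [card_l | run_l].
  case: run_r => k [card_r _ _]; move/eqP: p_mod; apply.
  apply: (prime_mod3_split _ _ _ _ _ p_prime (ltnW r_gt2) r_coprime card_l _ (esym S_card)).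
  by rewrite card_r dvdn_mull.
apply: (prime_not_run_multiple _ _ d.+1 _ p_prime s_lt n_lt); rewrite -S_card.
exact: run_multipleD.
Qed.

Theorem theorem7 (p t : nat) :
  prime p -> 5 <= p ->
  [/\ (* (a) *)
      p = 12 * t + 1 ->
        ~ has_induced_regular_of_order (copies_adj (3 * t) (CK 9 (6 * t))) p
        /\ 8 * #|{: 'I_(3 * t) * ('I_9 * 'I_(6 * t))}| = 9 * (p - 1) ^ 2,
      (* (b) *)
      p = 12 * t + 5 ->
        ~ has_induced_regular_of_order (copies_adj (3 * t + 1) (CK 9 (6 * t + 2))) p
        /\ 8 * #|{: 'I_(3 * t + 1) * ('I_9 * 'I_(6 * t + 2))}| = 9 * (p - 1) ^ 2,
      (* (c) *)
      p = 12 * t + 7 ->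
        ~ has_induced_regular_of_order
            (sum_adj (CK 5 (6 * t + 3)) (copies_adj (3 * t + 1) (CK 9 (6 * t + 3)))) p
        /\ 8 * #|{: ('I_5 * 'I_(6 * t + 3)) + ('I_(3 * t + 1) * ('I_9 * 'I_(6 * t + 3)))}|
             = (p - 1) * (9 * p - 7)
    & (* (d) *)
      p = 12 * t + 11 ->
        ~ has_induced_regular_of_order
            (sum_adj (CK 4 (6 * t + 5)) (copies_adj (3 * t + 2) (CK 9 (6 * t + 5)))) p
        /\ 8 * #|{: ('I_4 * 'I_(6 * t + 5)) + ('I_(3 * t + 2) * ('I_9 * 'I_(6 * t + 5)))}|
             = (p - 1) * (9 * p - 11)].
Proof.
move=> p_prime _; split=> p_eq; rewrite p_eq in p_prime *; split.
- by apply: no_regular_copies_CK => //=; lia.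
- by rewrite !card_prod !card_ord; nia.
- by apply: no_regular_copies_CK => //=; lia.
- by rewrite !card_prod !card_ord; nia.
- by apply: no_regular_CK_sum_copies => //=; lia.
- by rewrite card_sum !card_prod !card_ord; nia.
- by apply: no_regular_CK_sum_copies => //=; lia.
- by rewrite card_sum !card_prod !card_ord; nia.
Qed.
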